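(* Let $\alpha\in\mathbb N^n$ and let $\mathcal A=\{u_1,\ldots,u_m\}$ be a set of monomials of degree $d$ in $S=K[x_1,\ldots,x_n]$. Then $\mathcal A$ is sortable if and only if $\mathcal A^\alpha$ is sortable.
   Context: $\mathbb N$ denotes the positive integers. For $\alpha=(k_1,\ldots,k_n)$, $S^\alpha=K[x_{ij}:1\le i\le n,1\le j\le k_i]$, $\pi:S^\alpha\to S$, $x_{ij}\mapsto x_i$, and $\mathcal A^\alpha$ is the set of monomials $w\in S^\alpha$ with $\pi(w)\in\mathcal A$. Sorting: for a totally ordered set of variables and monomials $u,v$ of degree $d$, write $uv=z_1z_2\cdots z_{2d}$ with variables $z_1\le z_2\le\cdots\le z_{2d}$, and set $\mathrm{sort}(u,v)=(u',v')$ with $u'=\prod_{j=1}^d z_{2j-1}$, $v'=\prod_{j=1}^d z_{2j}$. A set $\mathcal B$ of degree-$d$ monomials is sortable if $\mathrm{sort}(u,v)\in\mathcal B\times\mathcal B$ for all $u,v\in\mathcal B$. In $S$ the variables are ordered $x_1<\cdots<x_n$ and in $S^\alpha$ they are ordered $x_{11}<\cdots<x_{1k_1}<\cdots<x_{n1}<\cdots<x_{nk_n}$. *)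

From mathcomp Require Import all_boot.

(* A monomial in m variables x_0 < x_1 < ... < x_(m-1) (ordered by index)
   is represented by its exponent vector. *)
Definition mon (m : nat) := {ffun 'I_m -> nat}.

Definition mdeg {m} (u : mon m) : nat := \sum_(i < m) u i.

Definition mmul {m} (u v : mon m) : mon m := [ffun i => u i + v i].

(* the monomial as the nondecreasing word z_1 <= z_2 <= ... of its variables *)
Definition word {m} (u : mon m) : seq 'I_m :=
  flatten [seq nseq (u x) x | x <- enum 'I_m].

Definition mon_of_seq {m} (s : seq 'I_m) : mon m := [ffun x => count_mem x s].

(* z_1 z_3 z_5 ... (1-indexed odd positions) and z_2 z_4 ... *)
Definition odd_pos {T} (s : seq T) : seq T :=
  mask [seq ~~ odd i | i <- iota 0 (size s)] s.
Definition even_pos {T} (s : seq T) : seq T :=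
  mask [seq odd i | i <- iota 0 (size s)] s.

Definition sort1 {m} (u v : mon m) : mon m := mon_of_seq (odd_pos (word (mmul u v))).
Definition sort2 {m} (u v : mon m) : mon m := mon_of_seq (even_pos (word (mmul u v))).

Definition sortable {m} (B : pred (mon m)) : Prop :=
  forall u v, B u -> B v -> B (sort1 u v) /\ B (sort2 u v).

(* For alpha = (k_1,...,k_n) (here k : 'I_n -> nat), S^alpha has
   N = k_1 + ... + k_n variables, indexed by 'I_N in the order
   x_11 < ... < x_1k_1 < x_21 < ... < x_nk_n.  The variable with index t
   lies in block i iff blk k i <= t < blk k i + k i; pi maps it to x_i. *)
Definition blk {n} (k : 'I_n -> nat) (i : 'I_n) : nat := \sum_(l < n | l < i) k l.

Definition in_block {n} (k : 'I_n -> nat) (t : nat) (i : 'I_n) : bool :=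
  (blk k i <= t) && (t < blk k i + k i).

Definition Ntot {n} (k : 'I_n -> nat) : nat := \sum_(i < n) k i.

Definition piMon {n} (k : 'I_n -> nat) (w : mon (Ntot k)) : mon n :=
  [ffun i => \sum_(t < Ntot k | in_block k t i) w t].

Definition polA {n} (k : 'I_n -> nat) (A : pred (mon n)) : pred (mon (Ntot k)) :=
  fun w => A (piMon k w).

From mathcomp Require Import all_boot.

(* The block map [x_ij |-> x_i] is monotone for the variable orders, and
   pushing a monomial forward along a monotone map of variables sends its
   sorted word to the image word letter by letter.  Since the odd and even
   positions of a word are preserved by a letterwise map, pushforward
   commutes with sorting: [sort (pi w1, pi w2) = pi (sort (w1, w2))].  Hence
   sortability of [A] passes to its preimage [A^alpha], and conversely, as
   [pi] has a section (send [x_i] to [x_i1]) every pair in [A] lifts to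
   [A^alpha]. *)

Definition ord_leq {m} : rel 'I_m := fun a b => a <= b.

Lemma ord_leq_trans {m} : transitive (@ord_leq m).
Proof. by move=> a b c; apply: leq_trans. Qed.

Lemma ord_leq_anti {m} : antisymmetric (@ord_leq m).
Proof. by move=> a b ab; apply/val_inj/eqP; rewrite eqn_leq. Qed.

Lemma path_nseq_cat m (x y : 'I_m) c s :
  ord_leq x y -> path ord_leq y s -> path ord_leq x (nseq c y ++ s).
Proof.
elim: c x => [|c IHc] x /= xy ys; last by rewrite xy IHc // /ord_leq leqnn.
by case: s ys => [|z s] //= /andP[yz ->]; rewrite (ord_leq_trans _ _ _ xy yz).
Qed.

Lemma path_flatten_nseq m (c : 'I_m -> nat) x s :
  path ord_leq x s -> path ord_leq x (flatten [seq nseq (c y) y | y <- s]).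
Proof.
elim: s x => [|y s IHs] x //= /andP[xy ys].
by apply: path_nseq_cat => //; apply: IHs.
Qed.

Lemma sorted_word m (w : mon m) : sorted ord_leq (word w).
Proof.
have : sorted ord_leq (enum 'I_m).
  by have := iota_sorted 0 m; rewrite -val_enum_ord sorted_map.
rewrite /word; case: (enum 'I_m) => [|y s] //= ys.
case: (w y) => [|c] /=; first exact/(path_sorted (x := y))/path_flatten_nseq.
by apply: path_nseq_cat; [rewrite /ord_leq leqnn | apply: path_flatten_nseq].
Qed.

Lemma count_word m (w : mon m) x : count_mem x (word w) = w x.
Proof.
rewrite /word count_flatten -map_comp sumnE big_map big_enum /=.
rewrite (bigD1 x) //= count_nseq /= eqxx mul1n big1 ?addn0 // => y /negbTE yx.
by rewrite count_nseq /= yx.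
Qed.

Lemma word_mon_of_seq m (s : seq 'I_m) :
  sorted ord_leq s -> word (mon_of_seq s) = s.
Proof.
move=> s_sorted.
apply: (sorted_eq ord_leq_trans ord_leq_anti) => //; first exact: sorted_word.
by apply/allP => x _; rewrite /= count_word ffunE.
Qed.

Lemma mon_of_word m (w : mon m) : mon_of_seq (word w) = w.
Proof. by apply/ffunP => x; rewrite ffunE count_word. Qed.

Lemma sum_nat_eq_pred (T : finType) (a : pred T) (x : T) : \sum_(t | a t) (x == t) = a x.
Proof.
case ax: (a x); last by rewrite big1 // => t ta; case: eqP ax => // ->; rewrite ta.
by rewrite (bigD1 x) //= eqxx big1 // => t /andP[_ /negbTE]; rewrite eq_sym => ->.
Qed.

Section Pushforward.

Context {N n : nat} (f : 'I_N -> 'I_n).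
Hypothesis f_mono : {homo f : x y / x <= y}.

Definition mon_push (w : mon N) : mon n := [ffun i => \sum_(t | f t == i) w t].

Lemma mon_push_mon_of_seq s : mon_push (mon_of_seq s) = mon_of_seq (map f s).
Proof.
apply/ffunP => i; rewrite !ffunE count_map.
elim: s => [|x s IHs] /=; first by rewrite big1 // => t _; rewrite ffunE.
rewrite -IHs -(sum_nat_eq_pred _ (fun t => f t == i)) -big_split /=.
by apply: eq_bigr => t _; rewrite !ffunE.
Qed.

Lemma mon_push_mmul u v : mon_push (mmul u v) = mmul (mon_push u) (mon_push v).
Proof.
by apply/ffunP => i; rewrite !ffunE -big_split; apply: eq_bigr => t _; rewrite ffunE.
Qed.

Lemma word_mon_push w : word (mon_push w) = map f (word w).
Proof.
rewrite -{1}(mon_of_word _ w) mon_push_mon_of_seq word_mon_of_seq //.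
exact: homo_sorted f_mono _ (sorted_word _ w).
Qed.

Lemma sort1_mon_push u v : sort1 (mon_push u) (mon_push v) = mon_push (sort1 u v).
Proof.
rewrite /sort1 -mon_push_mmul word_mon_push mon_push_mon_of_seq.
by rewrite /odd_pos map_mask size_map.
Qed.

Lemma sort2_mon_push u v : sort2 (mon_push u) (mon_push v) = mon_push (sort2 u v).
Proof.
rewrite /sort2 -mon_push_mmul word_mon_push mon_push_mon_of_seq.
by rewrite /even_pos map_mask size_map.
Qed.

Lemma sortable_preim (B : pred (mon n)) :
  sortable B -> sortable (fun w => B (mon_push w)).
Proof. by move=> sB u v Bu Bv; rewrite -sort1_mon_push -sort2_mon_push; apply: sB. Qed.

Variable g : 'I_n -> 'I_N.
Hypothesis g_section : cancel g f.

Definition mon_lift (u : mon n) : mon N :=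
  [ffun t => if t == g (f t) then u (f t) else 0].

Lemma mon_liftK : cancel mon_lift mon_push.
Proof.
move=> u; apply/ffunP => i.
rewrite ffunE (bigD1 (g i)) ?g_section //= ffunE g_section eqxx.
by rewrite big1 ?addn0 // => t /andP[/eqP <- tg]; rewrite ffunE (negbTE tg).
Qed.

Lemma sortable_of_preim (B : pred (mon n)) :
  sortable (fun w => B (mon_push w)) -> sortable B.
Proof.
move=> sB u v Bu Bv.
rewrite -(mon_liftK u) -(mon_liftK v) sort1_mon_push sort2_mon_push.
by apply: sB; rewrite mon_liftK.
Qed.

End Pushforward.

Lemma sum1_ord_lt n m : m <= n -> \sum_(i < n | i < m) 1 = m.
Proof.
by move=> mn; rewrite -(big_ord_widen_cond n xpredT (fun => 1)) // sum1_card card_ord.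
Qed.

Lemma downclosed_count_ltE n (P : pred 'I_n) :
    (forall i j : 'I_n, i <= j -> P j -> P i) ->
  forall j, P j = (j < \sum_(i < n) P i).
Proof.
move=> P_down j; rewrite (bigID (fun i : 'I_n => i < j)) /=.
case Pj: (P j).
  rewrite (eq_bigr (fun => 1)) => [|i ij]; last by rewrite (P_down i j (ltnW ij) Pj).
  rewrite sum1_ord_lt ?(ltnW (ltn_ord j)) // (bigD1 j) ?ltnn //= Pj.
  by rewrite add1n addnS ltnS leq_addr.
rewrite [X in _ + X]big1 => [|i]; last first.
  by rewrite -leqNgt => ji; case Pi: (P i) => //; rewrite (P_down j i ji Pi) in Pj.
rewrite addn0; apply/esym/negbTE.
rewrite -leqNgt -[leqRHS](@sum1_ord_lt n j (ltnW (ltn_ord j))).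
by apply: leq_sum => i _; apply: leq_b1.
Qed.

Section Blocks.

Context {n : nat} (k : 'I_n -> nat).

Definition prefix_sum (j : nat) : nat := \sum_(l < n | l < j) k l.

Lemma blkE (i : 'I_n) : blk k i = prefix_sum i.
Proof. by []. Qed.

Lemma prefix_sum0 : prefix_sum 0 = 0.
Proof. by rewrite /prefix_sum big_pred0. Qed.

Lemma prefix_sum_mono : {homo prefix_sum : j1 j2 / j1 <= j2}.
Proof.
move=> j1 j2 j12; rewrite /prefix_sum [leqRHS](bigID (fun l : 'I_n => l < j1)) /=.
rewrite [X in _ <= X + _](eq_bigl (fun l : 'I_n => l < j1)) ?leq_addr // => l.
by case: (ltnP l j1) => lj1; rewrite ?andbF // (leq_trans lj1 j12).
Qed.

Lemma prefix_sumS (i : 'I_n) : prefix_sum i.+1 = blk k i + k i.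
Proof.
rewrite /prefix_sum (bigD1 i) //= addnC; congr (_ + _).
by apply: eq_bigl => l; rewrite ltnS ltn_neqAle andbC.
Qed.

Lemma Ntot_prefix_sum : Ntot k = prefix_sum n.
Proof. by apply: eq_bigl => l; rewrite ltn_ord. Qed.

Definition block_of (t : nat) : nat := \sum_(j < n) (prefix_sum j.+1 <= t).

Lemma block_ofP t (j : 'I_n) : (prefix_sum j.+1 <= t) = (j < block_of t).
Proof.
apply: (@downclosed_count_ltE n (fun j : 'I_n => prefix_sum j.+1 <= t)) => i {}j ij.
exact/leq_trans/prefix_sum_mono.
Qed.

Lemma in_blockE t (i : 'I_n) : in_block k t i = (block_of t == i).
Proof.
rewrite /in_block -prefix_sumS ltnNge block_ofP -leqNgt eqn_leq andbC; congr (_ && _).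
rewrite blkE; case: i => [[|i] /= lt_i_n]; first by rewrite prefix_sum0.
exact: (block_ofP t (Ordinal (ltnW lt_i_n))).
Qed.

Lemma block_of_mono : {homo block_of : t1 t2 / t1 <= t2}.
Proof.
move=> t1 t2 t12; apply: leq_sum => j _.
by case: (leqP _ t1) => // /leq_trans/(_ t12) ->.
Qed.

Lemma block_of_lt t : t < Ntot k -> block_of t < n.
Proof.
rewrite Ntot_prefix_sum => t_lt.
have n_pos : 0 < n.
  case: (pickP (@predT 'I_n)) => [[l l_lt] _ | none]; first exact: leq_ltn_trans l_lt.
  by move: t_lt; rewrite /prefix_sum big_pred0 // => l; have := none l.
have n'_lt : n.-1 < n by rewrite ltn_predL.
have := block_ofP t (Ordinal n'_lt).
by rewrite /= prednK // leqNgt t_lt => /esym/negbT; rewrite -ltnNge.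
Qed.

End Blocks.

Section BlockMap.

Context {n : nat} (k : 'I_n -> nat).

Definition block_map (t : 'I_(Ntot k)) : 'I_n := Ordinal (block_of_lt _ _ (ltn_ord t)).

Lemma block_map_mono : {homo block_map : t1 t2 / t1 <= t2}.
Proof. exact: block_of_mono. Qed.

Lemma piMon_push : piMon k =1 mon_push block_map.
Proof.
by move=> w; apply/ffunP => i; rewrite !ffunE; apply: eq_bigl => t; rewrite in_blockE.
Qed.

Hypothesis k_pos : forall i, 0 < k i.

Lemma blk_lt_Ntot (i : 'I_n) : blk k i < Ntot k.
Proof.
rewrite Ntot_prefix_sum; apply: leq_trans (prefix_sum_mono k _ _ (ltn_ord i)).
by rewrite prefix_sumS -addn1 leq_add2l.
Qed.

Definition block_start (i : 'I_n) : 'I_(Ntot k) := Ordinal (blk_lt_Ntot i).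

Lemma block_startK : cancel block_start block_map.
Proof.
move=> i; apply/val_inj/eqP; rewrite /= -in_blockE /in_block leqnn /=.
by rewrite -addn1 leq_add2l.
Qed.

End BlockMap.

Theorem theorem2p14 (n d : nat) (k : 'I_n -> nat) (A : seq (mon n)) :
  (forall i, 0 < k i) ->
  (forall u, u \in A -> mdeg u = d) ->
  sortable (fun u => u \in A) <-> sortable (polA k (fun u => u \in A)).
Proof.
move=> k_pos _.
have polA_push w : polA k (mem A) w = (mon_push (block_map k) w \in A).
  by rewrite /polA piMon_push.
split=> [sA u v | sAa].
  rewrite !polA_push; exact: sortable_preim _ (block_map_mono k) _ sA u v.
apply: (sortable_of_preim _ (block_map_mono k) _ (block_startK k k_pos)) => u v.
rewrite -!polA_push; exact: sAa.
Qed.
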